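(* Let $G$ be a group and $c\in G$. If the set $\{(x,y)\in G^2:[x,y]=c\}$ is $4$-large in $G^2$, then $G$ is abelian and $c=1$. Consequently, if $\mu$ is a left-invariant probability measure on some algebra of subsets of $G^2$ with inner measure $\mu_*$, and $G$ is not abelian or $c\ne1$, then $\mu_*(\{(x,y)\in G^2:[x,y]=c\})\le\frac34$.
   Context: $[x,y]=x^{-1}y^{-1}xy$. A subset $X$ of a group $K$ is $k$-large in $K$ if the intersection of any $k$ left translates $a_1X\cap\dots\cap a_kX$ ($a_i\in K$) is non-empty. The inner measure is $\mu_*(X)=\sup\{\mu(Y):Y\subseteq X\text{ measurable}\}$. *)

From HB Require Import structures.
From mathcomp Require Import all_boot all_order all_algebra.
From mathcomp Require Import classical_sets boolp reals.
Set Implicit Arguments. Unset Strict Implicit. Unset Printing Implicit Defensive.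
Import Order.TTheory GRing.Theory Num.Theory.
Local Open Scope classical_set_scope.
Local Open Scope ring_scope.

Record is_group (G : Type) (mul : G -> G -> G) (inv : G -> G) (e : G) : Prop := {
  grp_assoc : forall x y z, mul x (mul y z) = mul (mul x y) z;
  grp_mul1g : forall x, mul e x = x;
  grp_mulg1 : forall x, mul x e = x;
  grp_mulVg : forall x, mul (inv x) x = e;
  grp_mulgV : forall x, mul x (inv x) = e }.

Definition abelian_grp (G : Type) (mul : G -> G -> G) : Prop :=
  forall x y, mul x y = mul y x.

Definition commutator (G : Type) (mul : G -> G -> G) (inv : G -> G) (x y : G) : G :=
  mul (mul (mul (inv x) (inv y)) x) y.

Definition mul2 (G : Type) (mul : G -> G -> G) (a b : G * G) : G * G :=
  (mul a.1 b.1, mul a.2 b.2).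

Definition ltrans (K : Type) (mul : K -> K -> K) (a : K) (X : set K) : set K :=
  [set z | exists2 x, X x & z = mul a x].

Definition k_large (K : Type) (mul : K -> K -> K) (k : nat) (X : set K) : Prop :=
  forall a : 'I_k -> K, exists z, forall i, ltrans mul (a i) X z.

Definition comm_fiber (G : Type) (mul : G -> G -> G) (inv : G -> G) (c : G)
  : set (G * G) := [set p | commutator mul inv p.1 p.2 = c].

Definition set_algebra (T : Type) (A : set (set T)) : Prop :=
  [/\ A setT, (forall X, A X -> A (~` X)) & (forall X Y, A X -> A Y -> A (X `|` Y))].

Definition prob_measure_on (R : realType) (T : Type) (A : set (set T))
  (mu : set T -> R) : Prop :=
  [/\ forall X, A X -> 0 <= mu X, mu setT = 1 &
      forall X Y, A X -> A Y -> X `&` Y = set0 -> mu (X `|` Y) = mu X + mu Y].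

Definition left_invariant (R : realType) (K : Type) (mul : K -> K -> K)
  (A : set (set K)) (mu : set K -> R) : Prop :=
  forall a X, A X -> A (ltrans mul a X) /\ mu (ltrans mul a X) = mu X.

Definition inner_measure (R : realType) (T : Type) (A : set (set T))
  (mu : set T -> R) (X : set T) : R :=
  sup [set mu Y | Y in [set Y | A Y /\ Y `<=` X]].

From HB Require Import structures.
From mathcomp Require Import all_boot all_order all_algebra.
From mathcomp Require Import classical_sets boolp reals lra.
Import Order.TTheory GRing.Theory Num.Theory.
Local Open Scope classical_set_scope.
Local Open Scope ring_scope.
Set Implicit Arguments. Unset Strict Implicit.

(* Since [x,y] = [x,hy] forces x and h to commute, a point z lying in the four
   translates of the fibre by (1,1), (1,h), (g,1), (g,h) yields x1 = z.1 and
   x2 = g^-1 z.1 both commuting with h, hence g commutes with h; once G is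
   abelian, the fibre is nonempty only for c = 1.  For the measure bound, any
   four translates of a measurable Y of measure > 3/4 have a common point,
   since their complements have total measure < 1; so Y, and any superset of
   it, is 4-large. *)

Lemma k_large4_translates (K : Type) (mul : K -> K -> K) (X : set K) :
  k_large mul 4 X -> forall a0 a1 a2 a3 : K, exists z,
  [/\ ltrans mul a0 X z, ltrans mul a1 X z, ltrans mul a2 X z & ltrans mul a3 X z].
Proof.
move=> large a0 a1 a2 a3.
have [z Hz] := large (fun i => nth a0 [:: a0; a1; a2; a3] i).
by exists z; split;
  [exact: (Hz (@Ordinal 4 0 isT)) | exact: (Hz (@Ordinal 4 1 isT)) |
   exact: (Hz (@Ordinal 4 2 isT)) | exact: (Hz (@Ordinal 4 3 isT))].
Qed.

Lemma k_largeS (K : Type) (mul : K -> K -> K) k (X Y : set K) :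
  Y `<=` X -> k_large mul k Y -> k_large mul k X.
Proof.
move=> YX largeY a; have [z Hz] := largeY a; exists z => i.
by have [y Yy ->] := Hz i; exists y => //; apply: YX.
Qed.

Section Group.
Variables (G : Type) (mul : G -> G -> G) (inv : G -> G) (e : G).
Hypothesis HG : is_group mul inv e.

Lemma mulgI (a : G) : injective (mul a).
Proof.
move=> x y /(congr1 (mul (inv a))).
by rewrite !(grp_assoc HG) (grp_mulVg HG) !(grp_mul1g HG).
Qed.

Lemma mulIg (a : G) : injective (mul^~ a).
Proof.
move=> x y /(congr1 (mul^~ (inv a))) /=.
by rewrite -!(grp_assoc HG) (grp_mulgV HG) !(grp_mulg1 HG).
Qed.

Lemma invMg x y : inv (mul x y) = mul (inv y) (inv x).
Proof.
apply: (mulgI (a := mul x y)); rewrite (grp_mulgV HG) -(grp_assoc HG).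
by rewrite [mul y _](grp_assoc HG) (grp_mulgV HG) (grp_mul1g HG) (grp_mulgV HG).
Qed.

Lemma commutatorMr_commute x y h :
  commutator mul inv x (mul h y) = commutator mul inv x y -> mul h x = mul x h.
Proof.
rewrite /commutator invMg -!(grp_assoc HG) => /mulgI /mulgI.
rewrite !(grp_assoc HG) => /mulIg /(congr1 (mul h)).
by rewrite !(grp_assoc HG) (grp_mulgV HG) (grp_mul1g HG).
Qed.

Lemma commute_mulIl g x h :
  mul h x = mul x h -> mul h (mul g x) = mul (mul g x) h -> mul h g = mul g h.
Proof.
move=> hx hgx; apply: (mulIg (a := x)).
by rewrite -(grp_assoc HG) hgx -!(grp_assoc HG) hx.
Qed.

Lemma commutator_abelian x y : abelian_grp mul -> commutator mul inv x y = e.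
Proof.
move=> ab; rewrite /commutator (ab (inv x)) -(grp_assoc HG _ (inv x)).
by rewrite (grp_mulVg HG) (grp_mulg1 HG) (grp_mulVg HG).
Qed.

Lemma comm_fiber_translates_commute c a h z :
  ltrans (mul2 mul) (a, e) (comm_fiber mul inv c) z ->
  ltrans (mul2 mul) (a, h) (comm_fiber mul inv c) z ->
  exists2 x, z.1 = mul a x & mul h x = mul x h.
Proof.
case=> [[x y] /= Fxy ->] [[x' y'] /= Fx'y' [/mulgI Ex Ey]].
exists x => //; apply: (commutatorMr_commute (y := y')).
by rewrite -Ey (grp_mul1g HG) Fxy Ex Fx'y'.
Qed.

Lemma comm_fiber_large_trivial c :
  k_large (mul2 mul) 4 (comm_fiber mul inv c) -> abelian_grp mul /\ c = e.
Proof.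
move=> large; have ab : abelian_grp mul.
  move=> g h.
  have [z [Z11 Z1h Zg1 Zgh]] :=
    k_large4_translates large (e, e) (e, h) (g, e) (g, h).
  have [x1 Ex1 Cx1] := comm_fiber_translates_commute Z11 Z1h.
  have [x2 Ex2 Cx2] := comm_fiber_translates_commute Zg1 Zgh.
  rewrite (grp_mul1g HG) in Ex1; rewrite -Ex1 Ex2 in Cx1.
  by apply/esym/(commute_mulIl Cx2).
split=> //.
have [_ [[[x y] Fxy _] _ _ _]] :=
  k_large4_translates large (e, e) (e, e) (e, e) (e, e).
by rewrite -Fxy commutator_abelian.
Qed.

End Group.

Section FinitelyAdditiveProbability.
Variables (R : realType) (T : Type) (A : set (set T)) (mu : set T -> R).
Hypotheses (hA : set_algebra A) (hmu : prob_measure_on A mu).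

Lemma set_algebra0 : A set0.
Proof. by case: hA => closedT closedC _; rewrite -setCT; apply: closedC. Qed.

Lemma set_algebraI X Y : A X -> A Y -> A (X `&` Y).
Proof.
case: hA => _ closedC closedU AX AY.
by rewrite -[X `&` Y]setCK setCI; apply/closedC/closedU; apply: closedC.
Qed.

Lemma set_algebraD X Y : A X -> A Y -> A (X `\` Y).
Proof.
by case: hA => _ closedC _ AX AY; apply: set_algebraI => //; apply: closedC.
Qed.

Lemma set_algebra_bigI (I : Type) (r : seq I) (P : pred I) (F : I -> set T) :
  (forall i, A (F i)) -> A (\big[setI/setT]_(i <- r | P i) F i).
Proof. by case: hA => closedT _ _ AF; apply: big_ind => //; apply: set_algebraI. Qed.

Lemma prob_measure_le X Y : A X -> A Y -> X `<=` Y -> mu X <= mu Y.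
Proof.
case: hmu => mu_ge0 _ muU AX AY XY.
rewrite -(setDUK XY) muU ?setDIK //; last exact: set_algebraD.
by rewrite lerDl mu_ge0 //; apply: set_algebraD.
Qed.

Lemma prob_measureC X : A X -> mu (~` X) = 1 - mu X.
Proof.
case: hA hmu => _ closedC _ [_ mu1 muU] AX.
have := muU X (~` X) AX (closedC _ AX) (setICr X); rewrite setUCr mu1; lra.
Qed.

Lemma prob_measure0 : mu set0 = 0.
Proof.
by case: hA hmu => closedT _ _ [_ mu1 _]; rewrite -setCT prob_measureC // mu1 subrr.
Qed.

Lemma prob_measureI_ge X Y : A X -> A Y -> mu X + mu Y - 1 <= mu (X `&` Y).
Proof.
case: hA hmu => _ closedC _ [_ _ muU] AX AY.
have XYc : mu (X `\` Y) <= mu (~` Y).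
  by apply: prob_measure_le; [exact: set_algebraD | exact: closedC | move=> z []].
have splitX : mu X = mu (X `&` Y) + mu (X `\` Y).
  rewrite -muU ?setUIDK //; [exact: set_algebraI | exact: set_algebraD |].
  by apply/seteqP; split=> z // [[_ ?] [_ ?]].
by move: XYc; rewrite prob_measureC // splitX; lra.
Qed.

Lemma prob_measure_bigI_ge (I : Type) (r : seq I) (P : pred I) (F : I -> set T) :
  (forall i, A (F i)) ->
  1 - \sum_(i <- r | P i) (1 - mu (F i)) <= mu (\big[setI/setT]_(i <- r | P i) F i).
Proof.
case: hmu => _ mu1 _ AF; elim: r => [|i r IHr].
  by rewrite !big_nil mu1 subr0.
rewrite !big_cons; case: (P i) => //.
have := prob_measureI_ge (AF i) (set_algebra_bigI r P AF); lra.
Qed.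

Lemma inner_measure_le X (b : R) :
  (forall Y, A Y -> Y `<=` X -> mu Y <= b) -> inner_measure A mu X <= b.
Proof.
move=> le_b; apply: ge_sup; last by move=> _ [Y [AY YX] <-]; apply: le_b.
by exists (mu set0), set0 => //; split; [exact: set_algebra0 | exact: sub0set].
Qed.

End FinitelyAdditiveProbability.

Lemma k_large_of_measure (R : realType) (K : Type) (mul : K -> K -> K)
  (A : set (set K)) (mu : set K -> R) (k : nat) (Y : set K) :
  set_algebra A -> prob_measure_on A mu -> left_invariant mul A mu ->
  A Y -> k%:R * (1 - mu Y) < 1 -> k_large mul k Y.
Proof.
move=> hA hmu hL AY small a.
set I := \big[setI/setT]_(i < k) ltrans mul (a i) Y.
have AaY i : A (ltrans mul (a i) Y) by case: (hL (a i) Y AY).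
have muI : 1 - k%:R * (1 - mu Y) <= mu I.
  have := prob_measure_bigI_ge hA hmu (index_enum 'I_k) xpredT AaY.
  rewrite (eq_bigr (fun=> 1 - mu Y)); last first.
    by move=> i _; case: (hL (a i) Y AY) => _ ->.
  by rewrite sumr_const card_ord mulr_natl.
have /set0P [z Iz] : I != set0.
  apply/eqP => I0; move: muI; rewrite I0 (prob_measure0 hA hmu); lra.
by exists z => i; move: Iz; rewrite /I (bigD1 i) //= => -[].
Qed.

Theorem corollary5p7 (G : Type) (mul : G -> G -> G) (inv : G -> G) (e : G)
  (HG : is_group mul inv e) (c : G) :
  (k_large (mul2 mul) 4 (comm_fiber mul inv c) -> abelian_grp mul /\ c = e) /\
  (forall (R : realType) (A : set (set (G * G))) (mu : set (G * G) -> R),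
     set_algebra A -> prob_measure_on A mu -> left_invariant (mul2 mul) A mu ->
     (~ abelian_grp mul \/ c <> e) ->
     inner_measure A mu (comm_fiber mul inv c) <= 3 / 4).
Proof.
split; first exact: comm_fiber_large_trivial.
move=> R A mu hA hmu hL nontrivial.
apply: (inner_measure_le hA) => Y AY YX; rewrite leNgt; apply/negP => big.
have : k_large (mul2 mul) 4 (comm_fiber mul inv c).
  by apply: (k_largeS YX); apply: (k_large_of_measure hA hmu hL AY); lra.
by case/(comm_fiber_large_trivial HG) => ? ?; case: nontrivial.
Qed.
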